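(* Let $M\in\mathbb{R}^{p\times q}_+$ and suppose $M$ has a psd factorization of size $k$. Then $M$ admits a psd factorization $M_{ij}=\langle A_i,B_j\rangle$ with $A_i,B_j\in\mathcal{S}^k_+$ such that $\operatorname{trace}(A_i)\le k$ for all $i=1,\dots,p$ and $\operatorname{trace}(B_j)=\sum_{i=1}^pM_{ij}$ for all $j=1,\dots,q$.
   Context: $\mathcal{S}^k_+$ denotes the cone of $k\times k$ real symmetric positive semidefinite matrices, with inner product $\langle A,B\rangle = \operatorname{trace}(AB)$. A psd factorization of size $k$ of a nonnegative matrix $M\in\mathbb{R}^{p\times q}_+$ is a collection $A_1,\dots,A_p, B_1,\dots,B_q \in \mathcal{S}^k_+$ with $M_{ij} = \langle A_i, B_j\rangle$ for all $i,j$. *)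

From HB Require Import structures.
From mathcomp Require Import all_boot all_order all_algebra.
Set Implicit Arguments. Unset Strict Implicit. Unset Printing Implicit Defensive.
Import Order.TTheory GRing.Theory Num.Theory.
Local Open Scope ring_scope.

Definition psd (R : rcfType) (k : nat) (A : 'M[R]_k) : Prop :=
  A^T = A /\ forall x : 'cV[R]_k, 0 <= (x^T *m A *m x) 0 0.

Definition inner (R : rcfType) (k : nat) (A B : 'M[R]_k) : R := \tr (A *m B).

Definition psd_factorization (R : rcfType) (p q k : nat) (M : 'M[R]_(p, q))
  (A : 'I_p -> 'M[R]_k) (B : 'I_q -> 'M[R]_k) : Prop :=
  (forall i, psd (A i)) /\ (forall j, psd (B j)) /\
  (forall i j, M i j = inner (A i) (B j)).

From HB Require Import structures.
From mathcomp Require Import all_boot all_order all_algebra.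
From mathcomp Require Import ring lra.
Set Implicit Arguments. Unset Strict Implicit. Unset Printing Implicit Defensive.
Import Order.TTheory GRing.Theory Num.Theory.
Local Open Scope ring_scope.

(* A factorization (A_i, B_j) can be moved along any congruence,
   (P^T A_i P, P^-1 B_j P^-T), without changing the inner products.  Choose P
   so that P^T (sum_i A_i) P = diag(d) is diagonal, then rescale by
   diag(d_t^(-1/2)) on the A side and diag(d_t^(1/2)) on the B side.  Each new
   A_i has diagonal entries (A_i)_tt / d_t <= 1, hence trace at most k, and
   trace(B_j) becomes <sum_i A_i, B_j> = sum_i M_ij. *)

Section Psd.

Variables (R : rcfType) (k : nat).
Implicit Types (A T X : 'M[R]_k).

Lemma quad_delta T s t :
  ((delta_mx s ord0 : 'cV[R]_k)^T *m T *m (delta_mx t ord0 : 'cV[R]_k)) 0 0 = T s t.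
Proof. by rewrite trmx_delta -rowE -colE !mxE. Qed.

Lemma psd_sym T s t : psd T -> T s t = T t s.
Proof. by case=> symT _; rewrite -{1}symT mxE. Qed.

Lemma psd_diag_ge0 T t : psd T -> 0 <= T t t.
Proof. by case=> _ posT; rewrite -quad_delta; apply: posT. Qed.

(* If T t t = 0 and T t s != 0, the quadratic form at e_s + c e_t is
   T s s + 2 c T t s, which is negative for a suitable c. *)
Lemma psd_diag_eq0_row T t s : psd T -> T t t = 0 -> T t s = 0.
Proof.
move=> psdT Ttt0; have symT := psd_sym s t psdT.
case: psdT => _ posT; apply/eqP/negP => /negP Tts_neq0.
pose c := - (T s s + 1) / (2 * T t s).
have := posT (delta_mx s ord0 + c *: delta_mx t ord0 : 'cV[R]_k).
rewrite !linearD /= !linearZ /= !mulmxDl ?mulmxDr -?scalemxAl -?scalemxAr.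
rewrite !(quad_delta, mxE) Ttt0 symT /c.
set e := (X in 0 <= X -> _); suff -> : e = -1 by move=> ?; lra.
by rewrite /e; field.
Qed.

Lemma psd_congr T X : psd T -> psd (X^T *m T *m X).
Proof.
case=> symT posT; split; first by rewrite !trmx_mul trmxK symT mulmxA.
by move=> x; have := posT (X *m x); rewrite trmx_mul !mulmxA.
Qed.

Lemma psd_sum (I : finType) (F : I -> 'M[R]_k) :
  (forall i, psd (F i)) -> psd (\sum_i F i).
Proof.
move=> psdF; split.
  by rewrite raddf_sum; apply: eq_bigr => i _; case: (psdF i).
move=> x; rewrite mulmx_sumr mulmx_suml summxE.
by apply: sumr_ge0 => i _; case: (psdF i) => _; apply.
Qed.

Lemma psd_diag_le_sum (I : finType) (F : I -> 'M[R]_k) i t :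
  (forall i, psd (F i)) -> F i t t <= (\sum_i F i) t t.
Proof.
move=> psdF; rewrite summxE (bigD1 i) //= lerDl.
by apply: sumr_ge0 => j _; apply: psd_diag_ge0.
Qed.

Lemma diag_mx_psd_fix A (e : 'rV[R]_k) :
  psd A -> (forall t, e 0 t = 1 \/ A t t = 0) ->
  diag_mx e *m A *m diag_mx e = A.
Proof.
move=> psdA e1; have fix_t t : forall s, e 0 t * A t s = A t s.
  case: (e1 t) => [-> s | At0 s]; first by rewrite mul1r.
  by rewrite psd_diag_eq0_row // mulr0.
apply/matrixP => i j; rewrite mul_mx_diag mul_diag_mx !mxE fix_t.
by rewrite mulrC (psd_sym i j) // fix_t psd_sym.
Qed.

Lemma inner_congr (A B X Y : 'M[R]_k) :
  inner (X^T *m A *m X) (Y *m B *m Y^T) = inner ((X *m Y)^T *m A *m (X *m Y)) B.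
Proof. by rewrite /inner trmx_mul !mulmxA mxtrace_mulC !mulmxA. Qed.

Lemma inner_suml (I : finType) (A : I -> 'M[R]_k) B :
  inner (\sum_i A i) B = \sum_i inner (A i) B.
Proof. by rewrite /inner mulmx_suml raddf_sum. Qed.

End Psd.

Section CongruenceDiagonalization.

Variables (R : rcfType) (k : nat).

Lemma congr_elementary_entry (T : 'M[R]_k) (m : 'I_k) (v : 'rV[R]_k) i j :
  let Q := 1%:M + (delta_mx m ord0 : 'cV[R]_k) *m v in
  (Q^T *m T *m Q) i j = T i j + v 0 i * T m j + T i m * v 0 j + v 0 i * T m m * v 0 j.
Proof.
rewrite /= [(_ + _)^T]raddfD /= trmx1 trmx_mul trmx_delta.
rewrite !mulmxDl !mulmxDr !mul1mx !mulmx1.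
rewrite !mulmxA -[v^T *m _ *m T]mulmxA -rowE -!colE.
rewrite !mxE !big_ord1 !mxE big_ord1 !mxE (ord1 ord0).
ring.
Qed.

Definition rows_diag_upto (T : 'M[R]_k) (n : nat) :=
  forall i j : 'I_k, (i < n)%N -> i != j -> T i j = 0.

Lemma psd_congr_diag_step (T : 'M[R]_k) (m : 'I_k) :
  psd T -> rows_diag_upto T m ->
  exists2 Q : 'M[R]_k, Q \in unitmx & rows_diag_upto (Q^T *m T *m Q) m.+1.
Proof.
move=> psdT diagT.
(* When [T m m = 0] this [v] is 0 (division by 0), and row [m] is already null. *)
pose v : 'rV[R]_k := \row_j (if j == m then 0 else - T m j / T m m).
pose e : 'cV[R]_k := delta_mx m ord0.
have ve0 : v *m e = 0.
  by rewrite -colE; apply/matrixP => a b; rewrite !mxE eqxx.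
exists (1%:M + e *m v).
  apply: (proj1 (@mulmx1_unit _ _ _ (1%:M - e *m v) _)).
  rewrite mulmxDl mul1mx mulmxBr mulmx1 -mulmxA (mulmxA v) ve0.
  by rewrite mul0mx mulmx0 subr0 subrK.
move=> i j; rewrite ltnS congr_elementary_entry => im ij.
have symT := psd_sym _ _ psdT.
case: (ltngtP i m) im => // [lt_im|/val_inj im] _; last subst i.
  have im : i != m by rewrite -(inj_eq val_inj) neq_ltn lt_im.
  by rewrite diagT // !mxE (negbTE im) symT diagT // oppr0 !mul0r !addr0.
rewrite !mxE eqxx eq_sym (negbTE ij) !mul0r !addr0.
have [Tmm0|Tmm_neq0] := eqVneq (T m m) 0.
  by rewrite (psd_diag_eq0_row j psdT Tmm0) Tmm0 mul0r addr0.
by field.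
Qed.

Lemma psd_congr_diag_upto (T : 'M[R]_k) n : psd T -> (n <= k)%N ->
  exists2 P : 'M[R]_k, P \in unitmx & rows_diag_upto (P^T *m T *m P) n.
Proof.
move=> psdT; elim: n => [|n IHn] lt_nk; first by exists 1%:M; rewrite ?unitmx1.
have [P unitP diagP] := IHn (ltnW lt_nk).
have [Q unitQ diagQ] :=
  psd_congr_diag_step (m := Ordinal lt_nk) (psd_congr P psdT) diagP.
exists (P *m Q); first by rewrite unitmx_mul unitP unitQ.
by move: diagQ; rewrite trmx_mul !mulmxA.
Qed.

Lemma psd_congr_diag (T : 'M[R]_k) : psd T ->
  exists2 P : 'M[R]_k, P \in unitmx & is_diag_mx (P^T *m T *m P).
Proof.
move=> /psd_congr_diag_upto/(_ (leqnn k))[P unitP diagP].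
by exists P => //; apply/is_diag_mxP => i j ij; apply: diagP.
Qed.

End CongruenceDiagonalization.

Section Factorizations.

Variables (R : rcfType) (p q k : nat) (M : 'M[R]_(p, q)).

Lemma psd_factorization_congr (A : 'I_p -> 'M[R]_k) (B : 'I_q -> 'M[R]_k)
    (P : 'M[R]_k) :
  psd_factorization M A B -> P \in unitmx ->
  psd_factorization M (fun i => P^T *m A i *m P)
                      (fun j => invmx P *m B j *m (invmx P)^T).
Proof.
move=> [psdA [psdB MAB]] unitP; split; [|split] => [i|j|i j].
- exact: psd_congr.
- by have := psd_congr (invmx P)^T (psdB j); rewrite trmxK.
- by rewrite inner_congr mulmxV // trmx1 mulmx1 mul1mx.
Qed.

(* Where [d 0 t = 0] both scalings vanish, which is harmless since then row [t]
   of every [A i] is null. *)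
Lemma psd_factorization_normalize (A : 'I_p -> 'M[R]_k) (B : 'I_q -> 'M[R]_k)
    (d : 'rV[R]_k) :
  psd_factorization M A B -> \sum_i A i = diag_mx d ->
  exists (A' : 'I_p -> 'M[R]_k) (B' : 'I_q -> 'M[R]_k),
    psd_factorization M A' B' /\
    (forall i, \tr (A' i) <= k%:R) /\ (forall j, \tr (B' j) = \sum_(i < p) M i j).
Proof.
move=> [psdA [psdB MAB]] sumA.
have diag_sumA t : (\sum_i A i) t t = d 0 t by rewrite sumA mxE eqxx mulr1n.
have d_ge0 t : 0 <= d 0 t by rewrite -diag_sumA; apply/psd_diag_ge0/psd_sum.
have le_Ad i t : A i t t <= d 0 t by rewrite -diag_sumA psd_diag_le_sum.
pose g := \row_t (Num.sqrt (d 0 t))^-1; pose h := \row_t Num.sqrt (d 0 t).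
have hh : diag_mx h *m diag_mx h = diag_mx d.
  by rewrite mulmx_diag; congr diag_mx; apply/rowP => t; rewrite !mxE -expr2 sqr_sqrtr.
have gh_supp i t : (\row_t (g 0 t * h 0 t)) 0 t = 1 \/ A i t t = 0.
  rewrite !mxE; have [d0|d_neq0] := eqVneq (d 0 t) 0.
    by right; apply/eqP; rewrite eq_le psd_diag_ge0 // -d0 le_Ad.
  by left; rewrite mulVf // sqrtr_eq0 -ltNge lt_def d_neq0 d_ge0.
exists (fun i => diag_mx g *m A i *m diag_mx g).
exists (fun j => diag_mx h *m B j *m diag_mx h).
split; [split; [|split]|split].
- by move=> i; rewrite -{1}tr_diag_mx; apply: psd_congr.
- by move=> j; rewrite -{1}tr_diag_mx; apply: psd_congr.
- move=> i j; rewrite MAB -{1}(tr_diag_mx g) -{2}(tr_diag_mx h) inner_congr.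
  by rewrite mulmx_diag tr_diag_mx diag_mx_psd_fix.
- move=> i; have -> : k%:R = \sum_(t < k) (1 : R) by rewrite sumr_const card_ord.
  apply: ler_sum => t _; rewrite mul_mx_diag mul_diag_mx !mxE.
  rewrite -mulrA mulrC -mulrA -invfM -expr2 sqr_sqrtr //.
  apply: (le_trans (ler_wpM2r _ (le_Ad i t))); first by rewrite invr_ge0.
  by have [->|d_neq0] := eqVneq (d 0 t) 0; rewrite ?mul0r ?ler01 ?mulfV.
- move=> j; rewrite mxtrace_mulC mulmxA hh -sumA.
  by rewrite -[\tr _]/(inner _ _) inner_suml; apply: eq_bigr => i _; rewrite MAB.
Qed.

End Factorizations.

Theorem lemma2p10 (R : rcfType) (p q k : nat) (M : 'M[R]_(p, q))
  (hM : forall i j, 0 <= M i j)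
  (hfac : exists (A : 'I_p -> 'M[R]_k) (B : 'I_q -> 'M[R]_k),
            psd_factorization M A B) :
  exists (A : 'I_p -> 'M[R]_k) (B : 'I_q -> 'M[R]_k),
    psd_factorization M A B /\
    (forall i, \tr (A i) <= k%:R) /\
    (forall j, \tr (B j) = \sum_(i < p) M i j).
Proof.
have [A [B facAB]] := hfac.
have [P unitP /diag_mxP[d diagS]] := psd_congr_diag (psd_sum facAB.1).
apply: (psd_factorization_normalize (d := d) (psd_factorization_congr facAB unitP)).
by rewrite -diagS mulmx_sumr mulmx_suml.
Qed.
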